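(* Let $\Sigma$ be the discrete-time LTI system $x_{k+1}=Ax_k+Bu_k$, $y_k=Cx_k+Du_k$ with real matrices of dimensions $n_x\times n_x$, $n_x\times n_u$, $n_y\times n_x$, $n_y\times n_u$ and $(A,B)$ controllable. Let $Q,M\in\mathbb{N}_{\geqslant 1}$, $\bm{\omega}=(\omega_0,\dots,\omega_{M-1})$ with $\omega_m\in[0,\pi)$, and let $\{U^{d,i}(\omega),Y^{d,i}(\omega)\}$, $i\in\{1,\dots,Q\}$, be input-output spectra of $\Sigma$ with sampled sequences $\bm{U}^{d,i}$, $\bm{Y}^{d,i}$ at the frequencies $\bm{\omega}$. Let $L_0,L\in\mathbb{N}$ with $n_x\leqslant L_0\leqslant L$, and suppose $\bm{U}^{d,i}$, $i\in\{1,\dots,Q\}$, are CPE of order $L+n_x$. Let $\{\bm{u}^{\mathrm{ini}},\bm{y}^{\mathrm{ini}}\}$ be a real input-output trajectory of $\Sigma$ of length $L_0$. Suppose $\{\bm{u},\bm{y}\}$ is a real input-output trajectory of $\Sigma$ of length $L$ with $(u_k,y_k)=(u^{\mathrm{ini}}_k,y^{\mathrm{ini}}_k)$ for $k=0,\dots,L_0-1$. Then there exists $g\in\mathbb{R}^{2MQ}$ such that $$\begin{bmatrix}u^{\mathrm{ini}}_{[0,L_0-1]}\\ u_{[L_0,L-1]}\\ y^{\mathrm{ini}}_{[0,L_0-1]}\end{bmatrix}=\begin{bmatrix}\Gamma_L(\{\bm{U}^{d,i}\}_{i=1}^Q,\bm{\omega})\\ \Gamma_{L_0}(\{\bm{Y}^{d,i}\}_{i=1}^Q,\bm{\omega})\end{bmatrix}g,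 \qquad (\ast)$$ and moreover, for any $g\in\mathbb{R}^{2MQ}$ satisfying $(\ast)$, the output satisfies $y_{[0,L-1]}=\Gamma_L(\{\bm{Y}^{d,i}\}_{i=1}^Q,\bm{\omega})g$.
   Context: $j=\sqrt{-1}$; $^*$ denotes entrywise complex conjugation; $\otimes$ is the Kronecker product; $\mathbb{W}=[-\pi,\pi)$. For a sequence $\bm{x}$, $x_{[n,m]}=(x_n,\dots,x_m)$ is the vertical stack of its entries. Input-output trajectory: real sequences $\{\bm{u},\bm{y}\}$ of length $N$ form an input-output trajectory of $\Sigma$ if there is a real state sequence $\bm{x}$ of length $N$ with $x_{k+1}=Ax_k+Bu_k$ for $k=0,\dots,N-2$ and $y_k=Cx_k+Du_k$ for $k=0,\dots,N-1$. Spectra: a spectrum is a function $V:\mathbb{W}\to\mathbb{C}^{n}$ with $V(\omega)=V^*(-\omega)$ for all $\omega$. A pair $\{U(\omega),Y(\omega)\}$ of such spectra (values in $\mathbb{C}^{n_u},\mathbb{C}^{n_y}$) is an input-output spectrum of $\Sigma$ if there exists a spectrum $X(\omega)\in\mathbb{C}^{n_x}$ with $e^{j\omega}X(\omega)=AX(\omega)+BU(\omega)$ and $Y(\omega)=CX(\omega)+DU(\omega)$ for all $\omega\in\mathbb{W}$. Sampled sequences: $\bm{U}^{d,i}=(U^{d,i}(\omega_0),\dots,U^{d,i}(\omega_{M-1}))$ and likewise for $\bm{Y}^{d,i}$. $W_L(\omega)=\begin{bmatrix}1 & e^{j\omega} & \cdots & e^{j\omega(L-1)}\end{bmatrix}^\top$.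 For $\bm{V}=(V_0,\dots,V_{M-1})$, $V_m\in\mathbb{C}^{n_v}$: $F_L(\bm{V},\bm{\omega})=\begin{bmatrix}W_L(\omega_0)\otimes V_0 & \cdots & W_L(\omega_{M-1})\otimes V_{M-1}\end{bmatrix}\in\mathbb{C}^{n_vL\times M}$. For sequences $\bm{V}^1,\dots,\bm{V}^Q$, the real $n_vL\times 2MQ$ matrix $\Gamma_L(\{\bm{V}^{i}\}_{i=1}^Q,\bm{\omega})=\begin{bmatrix}\operatorname{Re}F_L(\bm{V}^{1},\bm{\omega}) & \cdots & \operatorname{Re}F_L(\bm{V}^{Q},\bm{\omega}) & \operatorname{Im}F_L(\bm{V}^{1},\bm{\omega}) & \cdots & \operatorname{Im}F_L(\bm{V}^{Q},\bm{\omega})\end{bmatrix}$. Frequency-domain CPE: sequences $\bm{V}^i\in(\mathbb{C}^{n_v})^M$, $i=1,\dots,Q$, of samples $V^i_m=V^i(\omega_m)$ of symmetric spectra at frequencies $\omega_m\in[0,\pi)$ are collectively persistently exciting of order $L$ if $\begin{bmatrix}F_L(\bm{V}^{1},\bm{\omega}) & \cdots & F_L(\bm{V}^{Q},\bm{\omega}) & F_L^*(\bm{V}^{1},\bm{\omega}) & \cdots & F_L^*(\bm{V}^{Q},\bm{\omega})\end{bmatrix}$ has full row rank $n_vL$. *)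

From HB Require Import structures.
From mathcomp Require Import all_boot all_order all_algebra.
From mathcomp Require Import reals trigo.
From mathcomp Require Import complex.
Set Implicit Arguments. Unset Strict Implicit. Unset Printing Implicit Defensive.
Import Order.TTheory GRing.Theory Num.Theory.
Local Open Scope ring_scope.

Section Defs.
Variable R : realType.
Local Notation C := R[i].

Definition expj (w : R) : C := Complex (cos w) (sin w).

Definition cmx m n (A : 'M[R]_(m, n)) : 'M[C]_(m, n) := map_mx (real_complex R) A.

Definition conjmx m n (A : 'M[C]_(m, n)) : 'M[C]_(m, n) := map_mx (@conjc R) A.

Definition inW (w : R) : Prop := - pi <= w < pi.

Definition spectrum n (V : R -> 'cV[C]_n) : Prop :=
  forall w, inW w -> inW (- w) -> V w = conjmx (V (- w)).

Definition controllable nx nu (A : 'M[R]_nx) (B : 'M[R]_(nx, nu)) : bool :=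
  \rank (\mxrow_(k < nx) (A ^+ k *m B)) == nx.

Definition io_trajectory nx nu ny (A : 'M[R]_nx) (B : 'M[R]_(nx, nu))
  (Cm : 'M[R]_(ny, nx)) (D : 'M[R]_(ny, nu)) (N : nat)
  (u : nat -> 'cV[R]_nu) (y : nat -> 'cV[R]_ny) : Prop :=
  exists x : nat -> 'cV[R]_nx,
    (forall k, (k.+2 <= N)%N -> x k.+1 = A *m x k + B *m u k) /\
    (forall k, (k < N)%N -> y k = Cm *m x k + D *m u k).

Definition io_spectrum nx nu ny (A : 'M[R]_nx) (B : 'M[R]_(nx, nu))
  (Cm : 'M[R]_(ny, nx)) (D : 'M[R]_(ny, nu))
  (U : R -> 'cV[C]_nu) (Y : R -> 'cV[C]_ny) : Prop :=
  spectrum U /\ spectrum Y /\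
  exists X : R -> 'cV[C]_nx, spectrum X /\
    forall w, inW w ->
      expj w *: X w = cmx A *m X w + cmx B *m U w /\
      Y w = cmx Cm *m X w + cmx D *m U w.

(* stacking x_a, ..., x_(a+L-1) into a column of height L*n
   (block l occupies rows l*n, ..., l*n+n-1) *)
Definition stack (K : Type) L n (x : nat -> 'cV[K]_n) (a : nat) : 'cV[K]_(L * n) :=
  (mxvec (\matrix_(l < L, p < n) x (a + l)%N p 0))^T.

(* F_L(V, w) = [W_L(w_0) (x) V_0 ... W_L(w_(M-1)) (x) V_(M-1)] *)
Definition FL L M n (V : 'I_M -> 'cV[C]_n) (w : 'I_M -> R) : 'M[C]_(L * n, M) :=
  \matrix_(r < L * n, m < M)
     (mxvec (\matrix_(l < L, p < n) (expj (w m) ^+ l * V m p 0))) 0 r.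

Definition GammaL L M Q n (V : 'I_Q -> 'I_M -> 'cV[C]_n) (w : 'I_M -> R)
  : 'M[R]_(L * n, \sum_(i < Q) M + \sum_(i < Q) M) :=
  row_mx (\mxrow_(i < Q) map_mx (@complex.Re R) (FL L (V i) w))
         (\mxrow_(i < Q) map_mx (@complex.Im R) (FL L (V i) w)).

Definition CPE L M Q n (V : 'I_Q -> 'I_M -> 'cV[C]_n) (w : 'I_M -> R) : bool :=
  \rank (row_mx (\mxrow_(i < Q) FL L (V i) w)
                (\mxrow_(i < Q) conjmx (FL L (V i) w))) == (L * n)%N.

End Defs.

(* Any real combination g of the columns of the data matrices is the real part
   of a complex combination of sampled frequency responses, hence a trajectory
   of the system.  Two trajectories with the same input whose outputs agree on
   L0 >= nx steps have state difference d with C A^k d = 0 for k < nx, hence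
   for all k by Cayley-Hamilton: this gives the uniqueness part.
   For existence it suffices that every row r = (eta, zeta) annihilating the
   data matrix annihilates the trajectory data.  Expanding y = O x0 + T u turns
   r Gamma = 0 into xi X(w) + sum_k eta'_k e^{jwk} U(w) = 0 at every sampled
   frequency, with xi = zeta O and eta' = eta + zeta T.  Multiplying by the
   characteristic polynomial of A evaluated at e^{jw} eliminates X and leaves
   a polynomial relation of degree < L + nx against U, so persistency of
   excitation forces eta' = 0; controllability then forces xi = 0, and the same
   expansion applied to (u, y) shows r (u, y) = xi x0 + sum_k eta'_k u_k = 0. *)

From Pilot Require Import Defs.
From HB Require Import structures.
From mathcomp Require Import all_boot all_order all_algebra.
From mathcomp Require Import reals trigo.
From mathcomp Require Import complex.
From mathcomp Require Import ring.
Import Order.TTheory GRing.Theory Num.Theory.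
Local Open Scope ring_scope.
Set Implicit Arguments. Unset Strict Implicit. Unset Printing Implicit Defensive.

Lemma stackE (K : Type) L n (x : nat -> 'cV[K]_n) a l p :
  stack L x a (mxvec_index l p) 0 = x (a + l)%N p 0.
Proof. by rewrite /stack mxE mxvecE mxE. Qed.

Lemma eq_stack (K : Type) L n (x x' : nat -> 'cV[K]_n) a :
  (forall k, (k < L)%N -> x (a + k)%N = x' (a + k)%N) -> stack L x a = stack L x' a.
Proof.
move=> eq_x; apply/colP => r; case/mxvec_indexP: r => l p.
by rewrite !stackE eq_x.
Qed.

Lemma stack_inj (K : Type) L n (x x' : nat -> 'cV[K]_n) :
  stack L x 0 = stack L x' 0 -> forall k, (k < L)%N -> x k = x' k.
Proof.
move=> eq_x k ltkL; apply/colP => p.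
have := congr1 (fun v : 'cV[K]_(L * n) => v (mxvec_index (Ordinal ltkL) p) 0) eq_x.
by rewrite !stackE.
Qed.

Lemma stack_sum (K : nmodType) L n (I : Type) (r : seq I) (P : pred I)
    (x : I -> nat -> 'cV[K]_n) a :
  stack L (fun k => \sum_(i <- r | P i) x i k) a = \sum_(i <- r | P i) stack L (x i) a.
Proof.
apply/colP => q; case/mxvec_indexP: q => l p.
by rewrite stackE !summxE; apply: eq_bigr => i _; rewrite stackE.
Qed.

Lemma map_stack (K K' : Type) (f : K -> K') L n (x : nat -> 'cV[K]_n) a :
  map_mx f (stack L x a) = stack L (fun k => map_mx f (x k)) a.
Proof.
apply/colP => q; case/mxvec_indexP: q => l p.
by rewrite mxE !stackE mxE.
Qed.

Definition block_row (K : nmodType) L n (v : 'rV[K]_(L * n)) (t : nat) : 'rV[K]_n :=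
  if insub t is Some l then row l (vec_mx v) else 0.

Lemma mulmx_stack (K : pzSemiRingType) L n (v : 'rV[K]_(L * n)) (x : nat -> 'cV[K]_n) :
  v *m stack L x 0 = \sum_(l < L) block_row v l *m x l.
Proof.
apply/rowP => j; rewrite ord1 !mxE summxE (reindex _ (curry_mxvec_bij _ _)) /=.
under [RHS]eq_bigr => l _ do rewrite mxE.
rewrite pair_big /=; apply: eq_bigr => -[l p] _ /=.
by rewrite /block_row valK !mxE mxvecE mxE.
Qed.

Lemma map_block_row (K K' : nmodType) (f : {additive K -> K'}) L n (v : 'rV[K]_(L * n)) t :
  block_row (map_mx f v) t = map_mx f (block_row v t).
Proof. by rewrite /block_row; case: insub => [l|]; rewrite ?map_row ?map_vec_mx ?map_mx0. Qed.

Section RealPart.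
Variable R : realType.
Local Notation C := R[i].
Local Notation Re := (@complex.Re R).
Local Notation Im := (@complex.Im R).

Lemma Re_realM (a : R) (z : C) : Re (a%:C%C * z) = a * Re z.
Proof. by case: z => x y /=; rewrite mul0r subr0. Qed.

Lemma Im_realM (a : R) (z : C) : Im (a%:C%C * z) = a * Im z.
Proof. by case: z => x y /=; rewrite mul0r addr0. Qed.

Lemma cmx0 m n : cmx (0 : 'M[R]_(m, n)) = 0.
Proof. exact: map_mx0. Qed.

Lemma complex_eq0 (z : C) : Re z = 0 -> Im z = 0 -> z = 0.
Proof. by case: z => x y /= -> ->. Qed.

Lemma map_Re_cmxM m n p (A : 'M[R]_(m, n)) (Z : 'M[C]_(n, p)) :
  map_mx Re (cmx A *m Z) = A *m map_mx Re Z.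
Proof.
apply/matrixP => i j; rewrite !mxE raddf_sum; apply: eq_bigr => k _.
by rewrite !mxE; exact: Re_realM.
Qed.

Lemma map_Im_cmxM m n p (A : 'M[R]_(m, n)) (Z : 'M[C]_(n, p)) :
  map_mx Im (cmx A *m Z) = A *m map_mx Im Z.
Proof.
apply/matrixP => i j; rewrite !mxE raddf_sum; apply: eq_bigr => k _.
by rewrite !mxE; exact: Im_realM.
Qed.

Lemma map_ReIm_eq0 m n (Z : 'M[C]_(m, n)) : map_mx Re Z = 0 -> map_mx Im Z = 0 -> Z = 0.
Proof.
move=> /matrixP ReZ /matrixP ImZ; apply/matrixP => i j.
by have := ReZ i j; have := ImZ i j; rewrite !mxE => ImZij ReZij; exact: complex_eq0.
Qed.

Lemma map_ReIm_mulmx m n p (F : 'M[C]_(m, n)) (a b : 'M[R]_(n, p)) :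
  map_mx Re F *m a + map_mx Im F *m b = map_mx Re (F *m (cmx a - 'i *: cmx b)).
Proof.
apply/matrixP => i j; rewrite !mxE raddf_sum -big_split /=; apply: eq_bigr => k _.
by rewrite !mxE; case: (F i k) => x y /=; ring.
Qed.

End RealPart.

Local Notation ev z := (horner_morph (fun a => mulrC z a%:C%C)).

Lemma ev_coef (R : realType) (z : R[i]) (p : {poly R}) N :
  (size p <= N)%N -> ev z p = \sum_(k < N) (p`_k)%:C%C * z ^+ k.
Proof.
move=> le_pN; rewrite /horner_morph (horner_coef_wide _ (_ : size _ <= N)%N) ?size_map_poly //.
by apply: eq_bigr => k _; rewrite coef_map.
Qed.

Lemma sum_powers_ev (R : realType) l n (z : R[i]) (V : 'cV[R[i]]_n) (eta : nat -> 'rV[R]_n) :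
  (\sum_(k < l) cmx (eta k) *m (z ^+ k *: V)) 0 0 =
  \sum_j ev z (\poly_(k < l) eta k 0 j) * V j 0.
Proof.
rewrite summxE.
under eq_bigr => k _ do rewrite -scalemxAr mxE mxE mulr_sumr.
rewrite exchange_big /=; apply: eq_bigr => j _.
rewrite (ev_coef _ (size_poly _ _)) mulr_suml; apply: eq_bigr => k _.
by rewrite coef_poly ltn_ord !mxE; ring.
Qed.

Lemma poly_eq0_of_add_mul (F : fieldType) (q d r : {poly F}) :
  (size q < size d)%N -> q + d * r = 0 -> r = 0.
Proof.
move=> lt_qd qdr0; have d_neq0 : d != 0 by rewrite -size_poly_gt0 (leq_ltn_trans _ lt_qd).
have drq : d * r = - q by apply/eqP; rewrite -addr_eq0 addrC qdr0.
by rewrite -(mulKp r d_neq0) drq divp_small // size_polyN.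
Qed.

Section MatrixPolynomial.
Variables (K : comNzRingType) (n : nat) (A : 'M[K]_n).

Definition mx_eval (p : {poly K}) : 'M[K]_n := \sum_(k < size p) p`_k *: A ^+ k.

Lemma mx_eval_wide N (p : {poly K}) :
  (size p <= N)%N -> mx_eval p = \sum_(k < N) p`_k *: A ^+ k.
Proof.
move=> le_pN; rewrite /mx_eval (big_ord_widen N (fun k => p`_k *: A ^+ k) le_pN) big_mkcond.
apply: eq_bigr => k _; case: ltnP => // le_pk.
by rewrite nth_default // scale0r.
Qed.

Lemma mx_eval0 : mx_eval 0 = 0.
Proof. by rewrite /mx_eval size_poly0 big_ord0. Qed.

Lemma mx_evalD (p q : {poly K}) : mx_eval (p + q) = mx_eval p + mx_eval q.
Proof.
rewrite (mx_eval_wide (size_polyD p q)) (mx_eval_wide (leq_maxl (size p) (size q))).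
rewrite (mx_eval_wide (leq_maxr (size p) (size q))) -big_split.
by apply: eq_bigr => k _; rewrite coefD scalerDl.
Qed.

Lemma mx_evalC c : mx_eval c%:P = c%:M.
Proof. by rewrite (mx_eval_wide (size_polyC_leq1 _)) big_ord1 coefC /= expr0 scalemx1. Qed.

Lemma mx_evalMX (p : {poly K}) : mx_eval (p * 'X) = mx_eval p *m A.
Proof.
rewrite (@mx_eval_wide (size p).+1); last first.
  by rewrite (leq_trans (size_polyMleq _ _)) // size_polyX addn2.
rewrite big_ord_recl coefMX eqxx scale0r add0r mulmx_suml.
by apply: eq_bigr => k _; rewrite coefMX /= exprSr scalemxAl.
Qed.

Lemma mx_eval_comm (p : {poly K}) : mx_eval p *m A = A *m mx_eval p.
Proof.
rewrite mulmx_suml mulmx_sumr; apply: eq_bigr => k _.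
by rewrite -scalemxAl -scalemxAr -[_ *m A]/(A ^+ k * A) -exprSr exprS.
Qed.

End MatrixPolynomial.

Lemma mx_eval_char_poly (K : comNzRingType) n (A : 'M[K]_n) : mx_eval A (char_poly A) = 0.
Proof.
case: n A => [|n'] A; first by rewrite [LHS]flatmx0.
have := Cayley_Hamilton A; rewrite /horner_mx /horner_morph horner_coef.
rewrite size_map_poly_id0 => [<-|]; last by rewrite (monicP (char_poly_monic A)) oner_eq0.
by apply: eq_bigr => k _; rewrite coef_map /= -[_ * _]/(_ *m _) mul_scalar_mx.
Qed.

Lemma unobservable_all_powers (K : comNzRingType) n ny (A : 'M[K]_n) (Cm : 'M[K]_(ny, n))
    (d : 'cV[K]_n) :
  (forall k, (k < n)%N -> Cm *m A ^+ k *m d = 0) -> forall k, Cm *m A ^+ k *m d = 0.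
Proof.
move=> low_powers.
have A_n : A ^+ n = - \sum_(s < n) (char_poly A)`_s *: A ^+ s.
  have := mx_eval_char_poly A; rewrite /mx_eval size_char_poly big_ord_recr /=.
  have -> : (char_poly A)`_n = 1.
    by have := monicP (char_poly_monic A); rewrite lead_coefE size_char_poly.
  by rewrite scale1r => /eqP; rewrite addrC addr_eq0 => /eqP.
elim/ltn_ind => k IH; case: (ltnP k n) => [|le_nk]; first exact: low_powers.
rewrite -(subnK le_nk) exprD A_n -[_ * _]/(_ *m _) mulmxN mulmx_sumr mulmxN mulmx_sumr.
rewrite mulNmx mulmx_suml.
rewrite big1 ?oppr0 // => s _.
rewrite -!scalemxAr -scalemxAl -[A ^+ _ *m A ^+ _]/(A ^+ _ * A ^+ _) -exprD.
by rewrite IH ?scaler0 // -{2}(subnK le_nk) ltn_add2l.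
Qed.

Section ResponseExpansion.
Variables (K : comNzRingType) (nx nu ny : nat) (A : 'M[K]_nx) (B : 'M[K]_(nx, nu))
  (Cm : 'M[K]_(ny, nx)) (D : 'M[K]_(ny, nu)).

Definition markov (k : nat) : 'M[K]_(ny, nu) :=
  if k is k'.+1 then Cm *m A ^+ k' *m B else D.

(* [obs_weight zeta L0] and [toeplitz_weight zeta L0] are the row [zeta] multiplied
   by the observability and by the (block lower triangular) Toeplitz matrix of
   Markov parameters of horizon [L0]. *)
Definition obs_weight (zeta : nat -> 'rV[K]_ny) L0 : 'rV[K]_nx :=
  \sum_(t < L0) zeta t *m Cm *m A ^+ t.

Definition toeplitz_weight (zeta : nat -> 'rV[K]_ny) L0 (s : nat) : 'rV[K]_nu :=
  \sum_(t < L0 | (s <= t)%N) zeta t *m markov (t - s).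

Variables (x : nat -> 'cV[K]_nx) (u : nat -> 'cV[K]_nu) (y : nat -> 'cV[K]_ny) (N : nat).
Hypothesis x_next : forall k, (k.+2 <= N)%N -> x k.+1 = A *m x k + B *m u k.
Hypothesis y_out : forall k, (k < N)%N -> y k = Cm *m x k + D *m u k.

Lemma trajectory_state t : (t < N)%N ->
  x t = A ^+ t *m x 0 + \sum_(s < t) A ^+ (t - s.+1) *m B *m u s.
Proof.
elim: t => [|t IH] ltN; first by rewrite expr0 mul1mx big_ord0 addr0.
rewrite x_next // IH ?(ltnW ltN) // mulmxDr mulmxA big_ord_recr /= subnn expr0 mul1mx.
rewrite mulmx_sumr addrA; congr (_ + _ + _); first by rewrite exprS.
apply: eq_bigr => s _.
by rewrite !mulmxA -[A *m _]/(A * _) -exprS subSS subnSK.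
Qed.

Lemma trajectory_output t : (t < N)%N ->
  y t = Cm *m A ^+ t *m x 0 + \sum_(s < t.+1) markov (t - s) *m u s.
Proof.
move=> ltN; rewrite y_out // trajectory_state // mulmxDr mulmxA big_ord_recr /= subnn.
rewrite addrA mulmx_sumr; congr (_ + _ + _); apply: eq_bigr => s _.
by rewrite -(subnSK (ltn_ord s)) /= !mulmxA.
Qed.

Lemma weighted_output_sum (zeta : nat -> 'rV[K]_ny) L0 L : (L0 <= L)%N -> (L <= N)%N ->
  \sum_(t < L0) zeta t *m y t =
  obs_weight zeta L0 *m x 0 + \sum_(s < L) toeplitz_weight zeta L0 s *m u s.
Proof.
move=> le_L0L le_LN; rewrite /obs_weight mulmx_suml.
under eq_bigr => t _.
  rewrite trajectory_output ?(leq_trans (ltn_ord t) (leq_trans le_L0L le_LN)) //.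
  by rewrite mulmxDr !mulmxA; over.
rewrite big_split /=; congr (_ + _).
pose G (t s : nat) := if (s <= t)%N then zeta t *m markov (t - s) *m u s else 0.
transitivity (\sum_(t < L0) \sum_(s < L) G t s).
  apply: eq_bigr => t _.
  rewrite mulmx_sumr (big_ord_widen L (fun s => zeta t *m (markov (t - s) *m u s))
    (leq_trans (ltn_ord t) le_L0L)) big_mkcond.
  by apply: eq_bigr => s _; rewrite /G ltnS; case: ifP; rewrite ?mulmxA.
rewrite exchange_big; apply: eq_bigr => s _ /=.
rewrite /toeplitz_weight mulmx_suml [RHS]big_mkcond; apply: eq_bigr => t _ /=.
by rewrite /G; case: ifP; rewrite ?mul0mx.
Qed.

Lemma weighted_io_sum (eta : nat -> 'rV[K]_nu) (zeta : nat -> 'rV[K]_ny) L0 L :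
  (L0 <= L)%N -> (L <= N)%N ->
  \sum_(l < L) eta l *m u l + \sum_(t < L0) zeta t *m y t =
  obs_weight zeta L0 *m x 0 + \sum_(s < L) (eta s + toeplitz_weight zeta L0 s) *m u s.
Proof.
move=> le_L0L le_LN; rewrite (weighted_output_sum _ le_L0L le_LN) addrCA -big_split /=.
by under [in RHS]eq_bigr => s _ do rewrite mulmxDl.
Qed.

End ResponseExpansion.

Lemma map_mxX (K K' : comNzRingType) (f : {rmorphism K -> K'}) n (A : 'M[K]_n) k :
  map_mx f (A ^+ k) = map_mx f A ^+ k.
Proof.
elim: k => [|k IH]; last by rewrite !exprS map_mxM IH.
by apply/matrixP => i j; rewrite !mxE; case: (i == j); rewrite ?rmorph1 ?rmorph0.
Qed.

Section MapWeights.
Variables (K K' : comNzRingType) (f : {rmorphism K -> K'}).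
Variables (nx nu ny : nat) (A : 'M[K]_nx) (B : 'M[K]_(nx, nu))
  (Cm : 'M[K]_(ny, nx)) (D : 'M[K]_(ny, nu)) (zeta : nat -> 'rV[K]_ny) (L0 : nat).
Local Notation "M ^f" := (map_mx f M).

Lemma map_obs_weight :
  (obs_weight A Cm zeta L0)^f = obs_weight A^f Cm^f (fun t => (zeta t)^f) L0.
Proof. by rewrite map_mx_sum; apply: eq_bigr => t _; rewrite !map_mxM map_mxX. Qed.

Lemma map_toeplitz_weight s :
  (toeplitz_weight A B Cm D zeta L0 s)^f =
  toeplitz_weight A^f B^f Cm^f D^f (fun t => (zeta t)^f) L0 s.
Proof.
rewrite map_mx_sum; apply: eq_bigr => t _; rewrite map_mxM.
by case: (t - s)%N => [|k] //=; rewrite !map_mxM map_mxX.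
Qed.

End MapWeights.

Lemma mulmx_sol_of_left_kernel (F : fieldType) m p (G : 'M[F]_(m, p)) (v : 'cV[F]_m) :
  (forall r : 'rV[F]_m, r *m G = 0 -> r *m v = 0) -> exists g, v = G *m g.
Proof.
move=> ker_v; pose K := (cokermx G^T)^T.
have KG : K *m G = 0 by rewrite -[G in _ *m G]trmxK -trmx_mul mulmx_coker trmx0.
have Kv : K *m v = 0.
  apply/row_matrixP => j; rewrite row0 row_mul; apply: ker_v.
  by rewrite -row_mul KG row0.
have : (v^T <= G^T)%MS by rewrite submxE -[_ *m _]trmxK trmx_mul trmxK Kv trmx0.
by case/submxP => g vg; exists g^T; rewrite -[v]trmxK vg trmx_mul trmxK.
Qed.

Lemma io_trajectory_output_unique (R : realType) nx nu ny (A : 'M[R]_nx) (B : 'M[R]_(nx, nu))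
    (Cm : 'M[R]_(ny, nx)) (D : 'M[R]_(ny, nu)) L0 L u y u' y' :
  (nx <= L0)%N -> (L0 <= L)%N ->
  io_trajectory A B Cm D L u y -> io_trajectory A B Cm D L u' y' ->
  (forall k, (k < L)%N -> u k = u' k) -> (forall k, (k < L0)%N -> y k = y' k) ->
  forall k, (k < L)%N -> y k = y' k.
Proof.
move=> le_nxL0 le_L0L [x [x_next y_out]] [x' [x'_next y'_out]] eq_u eq_y.
pose d k := x k - x' k.
have d_pow k : (k < L)%N -> d k = A ^+ k *m d 0.
  elim: k => [|k IH] ltkL; first by rewrite expr0 mul1mx.
  rewrite /d x_next // x'_next // eq_u ?(ltnW ltkL) // opprD addrACA subrr addr0.
  by rewrite -mulmxBr -/(d k) IH ?(ltnW ltkL) // mulmxA -[A *m _]/(A * _) -exprS.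
have y_diff k : (k < L)%N -> y k - y' k = Cm *m A ^+ k *m d 0.
  move=> ltkL; rewrite y_out // y'_out // eq_u // opprD addrACA subrr addr0.
  by rewrite -mulmxBr -/(d k) d_pow // mulmxA.
have unobs_d0 := @unobservable_all_powers _ _ _ A Cm (d 0).
move=> k ltkL; apply/eqP; rewrite -subr_eq0 y_diff // unobs_d0 // => j ltj.
have ltjL0 := leq_trans ltj le_nxL0.
by rewrite -y_diff ?(leq_trans ltjL0) // eq_y // subrr.
Qed.

Section FrequencySamples.
Variables (R : realType) (Q M : nat) (w : 'I_M -> R).
Local Notation C := R[i].
Local Notation Re := (@complex.Re R).
Local Notation Im := (@complex.Im R).

Lemma col_FL L n (V : 'I_M -> 'cV[C]_n) m :
  col m (FL L V w) = stack L (fun l => expj (w m) ^+ l *: V m) 0.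
Proof.
apply/colP => r; case/mxvec_indexP: r => l p.
by rewrite stackE !mxE mxvecE !mxE add0n.
Qed.

Lemma mulmx_FL L n (V : 'I_M -> 'cV[C]_n) (c : 'cV[C]_M) :
  FL L V w *m c = stack L (fun k => \sum_m (c m 0 * expj (w m) ^+ k) *: V m) 0.
Proof.
apply/colP => r; case/mxvec_indexP: r => l p.
rewrite stackE !mxE summxE; apply: eq_bigr => m _.
by rewrite !mxE mxvecE !mxE add0n; ring.
Qed.

Lemma cmx_mulmx_FL L n (V : 'I_M -> 'cV[C]_n) (v : 'rV[R]_(L * n)) m :
  (cmx v *m FL L V w) 0 m =
  (\sum_(l < L) cmx (block_row v l) *m (expj (w m) ^+ l *: V m)) 0 0.
Proof.
have -> : (cmx v *m FL L V w) 0 m = (cmx v *m col m (FL L V w)) 0 0.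
  by rewrite !mxE; apply: eq_bigr => k _; rewrite [col _ _ _ _]mxE.
by rewrite col_FL mulmx_stack; under eq_bigr do rewrite map_block_row.
Qed.

Definition freq_signal n (V : 'I_Q -> 'I_M -> 'cV[C]_n) (c : 'I_Q -> 'cV[C]_M) (k : nat)
  : 'cV[C]_n := \sum_i \sum_m (c i m 0 * expj (w m) ^+ k) *: V i m.

(* The combination of the columns [Re F, Im F] by g = (a; b) is Re (F (a - j b)). *)
Definition gamma_coef (g : 'cV[R]_(\sum_(i < Q) M + \sum_(i < Q) M)) (i : 'I_Q) : 'cV[C]_M :=
  cmx (submxcol (usubmx g) i) - 'i *: cmx (submxcol (dsubmx g) i).

Lemma GammaL_mulmx L n (V : 'I_Q -> 'I_M -> 'cV[C]_n) g :
  GammaL L V w *m g = stack L (fun k => map_mx Re (freq_signal V (gamma_coef g) k)) 0.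
Proof.
rewrite -[g in LHS](vsubmxK g) -(submxcolK (usubmx g)) -(submxcolK (dsubmx g)).
rewrite /GammaL mul_row_col !mul_mxrow_mxcol -big_split /=.
under eq_bigr => i _ do rewrite map_ReIm_mulmx mulmx_FL map_stack.
rewrite -stack_sum; apply: eq_stack => k _; rewrite add0n raddf_sum.
by apply: eq_bigr => i _.
Qed.

Lemma mulmx_GammaL L n (V : 'I_Q -> 'I_M -> 'cV[C]_n) (v : 'rV[R]_(L * n)) :
  v *m GammaL L V w = row_mx (\mxrow_i map_mx Re (cmx v *m FL L (V i) w))
                             (\mxrow_i map_mx Im (cmx v *m FL L (V i) w)).
Proof.
rewrite mul_mx_row !mul_mxrow.
by congr row_mx; apply: eq_mxrow => i; rewrite (map_Re_cmxM, map_Im_cmxM).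
Qed.

Lemma GammaL_left_kernel L1 L2 n1 n2 (V1 : 'I_Q -> 'I_M -> 'cV[C]_n1)
    (V2 : 'I_Q -> 'I_M -> 'cV[C]_n2) (r1 : 'rV[R]_(L1 * n1)) (r2 : 'rV[R]_(L2 * n2)) :
  r1 *m GammaL L1 V1 w + r2 *m GammaL L2 V2 w = 0 ->
  forall i m, \sum_(l < L1) cmx (block_row r1 l) *m (expj (w m) ^+ l *: V1 i m) +
              \sum_(l < L2) cmx (block_row r2 l) *m (expj (w m) ^+ l *: V2 i m) = 0.
Proof.
rewrite !mulmx_GammaL add_row_mx -!mxrowD => /eqP; rewrite row_mx_eq0.
rewrite -!(mxrow0 (q_ := fun=> M)) => /andP[/eqP/eq_mxrowP ReZ /eqP/eq_mxrowP ImZ] i m.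
have Z0 : cmx r1 *m FL L1 (V1 i) w + cmx r2 *m FL L2 (V2 i) w = 0.
  by apply: map_ReIm_eq0; rewrite map_mxD (ReZ i, ImZ i).
apply/rowP => j; rewrite ord1 [LHS]mxE [RHS]mxE.
by have := congr1 (fun Z : 'rV_M => Z 0 m) Z0; rewrite [LHS]mxE [RHS]mxE !cmx_mulmx_FL.
Qed.

Lemma CPE_poly_eq0 L n (V : 'I_Q -> 'I_M -> 'cV[C]_n) : CPE L V w ->
  forall P : 'I_n -> {poly R}, (forall j, (size (P j) <= L)%N) ->
  (forall i m, \sum_j ev (expj (w m)) (P j) * V i m j 0 = 0) -> forall j, P j = 0.
Proof.
move=> CPE_V P le_PL PV0.
pose v : 'rV[R]_(L * n) := mxvec (\matrix_(l < L, j < n) (P j)`_l).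
have vP j : \poly_(k < L) block_row v k 0 j = P j.
  apply/polyP => k; rewrite coef_poly; case: ltnP => [ltkL|leLk].
    by rewrite /block_row insubT /= mxvecK !mxE.
  by rewrite nth_default // (leq_trans (le_PL j)).
have FL0 i : cmx v *m FL L (V i) w = 0.
  apply/rowP => m; rewrite cmx_mulmx_FL sum_powers_ev mxE.
  by under eq_bigr do rewrite vP; exact: PV0.
have conj_FL0 i : cmx v *m Defs.conjmx (FL L (V i) w) = 0.
  have -> : cmx v = Defs.conjmx (cmx v) by apply/matrixP => a b; rewrite !mxE conjc_real.
  by rewrite /Defs.conjmx -map_mxM FL0 map_mx0.
have v0 : v = 0.
  apply/eqP; rewrite -(map_mx_eq0 (real_complex R)) -/(cmx v) -(mulmx_free_eq0 _ CPE_V).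
  by rewrite mul_mx_row !mul_mxrow (eq_mxrow FL0) (eq_mxrow conj_FL0) !mxrow0 row_mx0.
move=> j; rewrite -vP v0; apply/polyP => k; rewrite coef_poly coef0 /block_row.
by case: ifP => // _; case: insub => [l|]; rewrite ?linear0 ?row0 mxE.
Qed.

Section FrequencyResponse.
Variables (nx nu ny : nat) (A : 'M[R]_nx) (B : 'M[R]_(nx, nu))
  (Cm : 'M[R]_(ny, nx)) (D : 'M[R]_(ny, nu)).
Variables (X : 'I_Q -> 'I_M -> 'cV[C]_nx) (U : 'I_Q -> 'I_M -> 'cV[C]_nu)
  (Y : 'I_Q -> 'I_M -> 'cV[C]_ny).
Hypothesis freq_state : forall i m, expj (w m) *: X i m = cmx A *m X i m + cmx B *m U i m.
Hypothesis freq_output : forall i m, Y i m = cmx Cm *m X i m + cmx D *m U i m.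

Lemma freq_signal_io_trajectory N c :
  io_trajectory A B Cm D N (fun k => map_mx Re (freq_signal U c k))
                           (fun k => map_mx Re (freq_signal Y c k)).
Proof.
exists (fun k => map_mx Re (freq_signal X c k)); split => k _; rewrite -!map_Re_cmxM -map_mxD.
  rewrite /freq_signal !mulmx_sumr -big_split; congr map_mx; apply: eq_bigr => i _ /=.
  rewrite !mulmx_sumr -big_split; apply: eq_bigr => m _ /=.
  by rewrite exprSr mulrA -scalerA freq_state scalerDr -!scalemxAr.
rewrite /freq_signal !mulmx_sumr -big_split; congr map_mx; apply: eq_bigr => i _ /=.
rewrite !mulmx_sumr -big_split; apply: eq_bigr => m _ /=.
by rewrite freq_output scalerDr -!scalemxAr.
Qed.

Local Notation resp xi i m := ((cmx xi *m X i m) 0 0).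

Lemma resp_next (xi : 'rV[R]_nx) i m :
  expj (w m) * resp xi i m = resp (xi *m A) i m + (cmx (xi *m B) *m U i m) 0 0.
Proof.
transitivity ((cmx xi *m (expj (w m) *: X i m)) 0 0); first by rewrite -scalemxAr [RHS]mxE.
by rewrite freq_state mulmxDr !mulmxA /cmx -!map_mxM mxE.
Qed.

Lemma respD (xi xi' : 'rV[R]_nx) i m : resp (xi + xi') i m = resp xi i m + resp xi' i m.
Proof. by rewrite /cmx map_mxD mulmxDl mxE. Qed.

Lemma respZ c (xi : 'rV[R]_nx) i m : resp (c *: xi) i m = c%:C%C * resp xi i m.
Proof. by rewrite /cmx map_mxZ -scalemxAl mxE. Qed.

Lemma resp_poly (p : {poly R}) (xi : 'rV[R]_nx) : exists q : 'I_nu -> {poly R},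
  (forall j, (size (q j) <= (size p).-1)%N) /\
  forall i m, ev (expj (w m)) p * resp xi i m =
              resp (xi *m mx_eval A p) i m + \sum_j ev (expj (w m)) (q j) * U i m j 0.
Proof.
elim/poly_ind: p xi => [|p c IH] xi.
  exists (fun=> 0); split => [j|i m]; first by rewrite size_poly0.
  rewrite rmorph0 mul0r mx_eval0 mulmx0 cmx0 mul0mx mxE add0r big1 // => j _.
  by rewrite mul0r.
have [q [size_q qE]] := IH (xi *m A).
exists (fun j => q j + p * ((xi *m B) 0 j)%:P); split => [j|i m].
  rewrite size_MXaddC; case: eqP => [p0|_].
    by move: (size_q j); rewrite p0 size_poly0 leqn0 mul0r addr0 => /eqP->.
  rewrite /= (leq_trans (size_polyD _ _)) // geq_max (leq_trans (size_q j)) ?leq_pred //=.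
  apply: leq_trans (size_polyMleq _ _) _.
  by rewrite -subn1 leq_subLR addnC leq_add2r size_polyC_leq1.
rewrite rmorphD rmorphM /= horner_morphX horner_morphC mulrDl -mulrA resp_next mulrDr qE.
rewrite mx_evalD mx_evalMX mx_evalC mulmxDr mx_eval_comm mulmxA mul_mx_scalar respD respZ.
rewrite [(cmx (xi *m B) *m U i m) 0 0]mxE mulr_sumr.
under [X in _ = _ + X]eq_bigr => j _ do rewrite rmorphD rmorphM /= horner_morphC mulrDl.
rewrite big_split /=.
under [X in _ = _ + (_ + X)]eq_bigr => j _ do rewrite -mulrA.
under [X in _ + _ + X + _ = _]eq_bigr => j _ do rewrite mxE.
ring.
Qed.

Variable N : nat.
Hypothesis CPE_U : forall P : 'I_nu -> {poly R}, (forall j, (size (P j) <= N)%N) ->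
  (forall i m, \sum_j ev (expj (w m)) (P j) * U i m j 0 = 0) -> forall j, P j = 0.

Lemma freq_coef_eq0 l (xi : 'rV[R]_nx) (eta : nat -> 'rV[R]_nu) : (l + nx <= N)%N ->
  (forall i m,
     resp xi i m + (\sum_(k < l) cmx (eta k) *m (expj (w m) ^+ k *: U i m)) 0 0 = 0) ->
  forall k, (k < l)%N -> eta k = 0.
Proof.
move=> le_lN freq0.
have [q [size_q qE]] := resp_poly (char_poly A) xi.
rewrite size_char_poly /= in size_q.
pose pe j := \poly_(k < l) eta k 0 j.
have pe0 j : pe j = 0.
  apply: (@poly_eq0_of_add_mul _ (q j) (char_poly A)); first by rewrite size_char_poly ltnS.
  move: j; apply: CPE_U => [j|i m].
    rewrite (leq_trans (size_polyD _ _)) // geq_max; apply/andP; split.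
      by rewrite (leq_trans (size_q j)) // (leq_trans _ le_lN) // leq_addl.
    apply: leq_trans (size_polyMleq _ _) _.
    by rewrite size_char_poly addSn /= addnC (leq_trans _ le_lN) // leq_add2r size_poly.
  under eq_bigr => j _ do rewrite rmorphD rmorphM mulrDl -mulrA.
  rewrite big_split /= -mulr_sumr -sum_powers_ev.
  have := qE i m; rewrite mx_eval_char_poly mulmx0 cmx0 mul0mx [X in _ = X + _]mxE add0r => <-.
  by rewrite -mulrDr (_ : _ + _ = 0) ?mulr0 //; exact: freq0.
move=> k ltkl; apply/rowP => j; have := congr1 (fun p : {poly R} => p`_k) (pe0 j).
by rewrite coef_poly ltkl coef0 mxE.
Qed.

Lemma freq_state_eq0 (ctrb : controllable A B) (xi : 'rV[R]_nx) : (1 + nx <= N)%N ->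
  (forall i m, resp xi i m = 0) -> xi = 0.
Proof.
move=> le_1N xi0.
have step (z : 'rV[R]_nx) : (forall i m, resp z i m = 0) ->
    z *m B = 0 /\ (forall i m, resp (z *m A) i m = 0).
  move=> z0.
  have freq0 i m : resp (z *m A) i m +
      (\sum_(k < 1) cmx ((fun=> z *m B) k) *m (expj (w m) ^+ k *: U i m)) 0 0 = 0.
    by rewrite big_ord1 expr0 scale1r -resp_next z0 mulr0.
  have zB0 : z *m B = 0 := freq_coef_eq0 (eta := fun=> z *m B) le_1N freq0 (ltn0Sn 0).
  split => // i m.
  by have := freq0 i m; rewrite big_ord1 /= zB0 cmx0 mul0mx [X in _ + X]mxE addr0.
have resp_pow r : forall i m, resp (xi *m A ^+ r) i m = 0.
  elim: r => [|r IH]; first by rewrite expr0 mulmx1.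
  by rewrite exprSr -[_ * A]/(_ *m A) mulmxA; case: (step _ IH).
apply/eqP; rewrite -(mulmx_free_eq0 _ ctrb) mul_mxrow.
rewrite -(mxrow0 (q_ := fun=> nu)); apply/eqP/eq_mxrow => k.
by rewrite mulmxA; case: (step _ (resp_pow k)).
Qed.

Lemma freq_kernel_io_sum (ctrb : controllable A B) L0 L (eta : nat -> 'rV[R]_nu)
    (zeta : nat -> 'rV[R]_ny) u y :
  (L0 <= L)%N -> (L + nx <= N)%N ->
  (forall i m, \sum_(l < L) cmx (eta l) *m (expj (w m) ^+ l *: U i m) +
               \sum_(t < L0) cmx (zeta t) *m (expj (w m) ^+ t *: Y i m) = 0) ->
  io_trajectory A B Cm D L u y ->
  \sum_(l < L) eta l *m u l + \sum_(t < L0) zeta t *m y t = 0.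
Proof.
move=> le_L0L le_LN freq_kernel [x [x_next y_out]].
pose xi := obs_weight A Cm zeta L0.
pose eta' s := eta s + toeplitz_weight A B Cm D zeta L0 s.
have freq_id i m :
    resp xi i m + (\sum_(k < L) cmx (eta' k) *m (expj (w m) ^+ k *: U i m)) 0 0 = 0.
  pose e := expj (w m).
  have sample_next k : (k.+2 <= L)%N ->
      e ^+ k.+1 *: X i m = cmx A *m (e ^+ k *: X i m) + cmx B *m (e ^+ k *: U i m).
    by move=> _; rewrite exprSr -scalerA freq_state scalerDr -!scalemxAr.
  have sample_out k : (k < L)%N ->
      e ^+ k *: Y i m = cmx Cm *m (e ^+ k *: X i m) + cmx D *m (e ^+ k *: U i m).
    by move=> _; rewrite freq_output scalerDr -!scalemxAr.
  have := weighted_io_sum sample_next sample_out (fun l => cmx (eta l))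
    (fun t => cmx (zeta t)) le_L0L (leqnn L).
  rewrite freq_kernel expr0 scale1r -(map_obs_weight (real_complex R)) -/(cmx xi).
  under eq_bigr => k _ do rewrite -(map_toeplitz_weight (real_complex R)) -map_mxD -/(cmx _).
  by move/(congr1 (fun Z : 'M_1 => Z 0 0)); rewrite [LHS]mxE [RHS]mxE.
have eta'0 := freq_coef_eq0 le_LN freq_id.
have xi0 : xi = 0.
  have [L0'|L_gt0] := posnP L.
    by move: le_L0L; rewrite L0' leqn0 => /eqP L00; rewrite /xi L00 /obs_weight big_ord0.
  apply: (freq_state_eq0 ctrb) => [|i m]; first by apply: leq_trans le_LN; rewrite leq_add2r.
  have := freq_id i m; rewrite big1 ?mxE ?addr0 // => k _.
  by rewrite eta'0 // cmx0 mul0mx.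
rewrite (weighted_io_sum x_next y_out eta zeta le_L0L (leqnn L)) -/xi xi0 mul0mx add0r.
by apply: big1 => k _; move: (eta'0 k (ltn_ord k)); rewrite /eta' => ->; rewrite mul0mx.
Qed.

End FrequencyResponse.

End FrequencySamples.

Theorem proposition1 (R : realType) (nx nu ny : nat)
  (A : 'M[R]_nx) (B : 'M[R]_(nx, nu)) (Cm : 'M[R]_(ny, nx)) (D : 'M[R]_(ny, nu))
  (hctrb : controllable A B)
  (Q M : nat) (hQ : (1 <= Q)%N) (hM : (1 <= M)%N)
  (w : 'I_M -> R) (hw : forall m, 0 <= w m < pi)
  (Ud : 'I_Q -> R -> 'cV[R[i]]_nu) (Yd : 'I_Q -> R -> 'cV[R[i]]_ny)
  (hspec : forall i, io_spectrum A B Cm D (Ud i) (Yd i))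
  (L0 L : nat) (hL0 : (nx <= L0)%N) (hL : (L0 <= L)%N)
  (hCPE : CPE (L + nx) (fun i m => Ud i (w m)) w)
  (uini : nat -> 'cV[R]_nu) (yini : nat -> 'cV[R]_ny)
  (hini : io_trajectory A B Cm D L0 uini yini)
  (u : nat -> 'cV[R]_nu) (y : nat -> 'cV[R]_ny)
  (htraj : io_trajectory A B Cm D L u y)
  (hagree : forall k, (k < L0)%N -> u k = uini k /\ y k = yini k) :
  let Gu := GammaL L (fun i m => Ud i (w m)) w in
  let GyL0 := GammaL L0 (fun i m => Yd i (w m)) w in
  let GyL := GammaL L (fun i m => Yd i (w m)) w in
  let lhs := col_mx (stack L (fun k => if (k < L0)%N then uini k else u k) 0)
                    (stack L0 yini 0) in
  (exists g, lhs = col_mx Gu GyL0 *m g) /\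
  (forall g, lhs = col_mx Gu GyL0 *m g -> stack L y 0 = GyL *m g).
Proof.
move=> Gu GyL0 GyL lhs.
have w_inW m : inW (w m).
  case/andP: (hw m) => w_ge0 w_ltpi; rewrite /inW w_ltpi andbT.
  by apply: le_trans w_ge0; rewrite oppr_le0 ltW // pi_gt0.
have /fin_all_exists [X freqX] : forall i, exists Xi : 'I_M -> 'cV[R[i]]_nx, forall m,
    expj (w m) *: Xi m = cmx A *m Xi m + cmx B *m Ud i (w m) /\
    Yd i (w m) = cmx Cm *m Xi m + cmx D *m Ud i (w m).
  move=> i; have [_ [_ [Xi [_ Xi_resp]]]] := hspec i.
  by exists (fun m => Xi (w m)) => m; exact: Xi_resp.
have freq_state i m := (freqX i m).1.
have freq_output i m := (freqX i m).2.
have lhsE : lhs = col_mx (stack L u 0) (stack L0 y 0).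
  congr col_mx; apply: eq_stack => k ltk /=.
    by case: ifP => // ltkL0; case: (hagree k ltkL0).
  by case: (hagree k ltk).
split.
  apply: mulmx_sol_of_left_kernel => r; rewrite -(hsubmxK r) mul_row_col => kernel.
  rewrite lhsE mul_row_col !mulmx_stack.
  exact: (freq_kernel_io_sum freq_state freq_output (CPE_poly_eq0 hCPE) hctrb hL (leqnn _)
            (GammaL_left_kernel kernel) htraj).
move=> g; rewrite lhsE mul_col_mx !GammaL_mulmx => /eq_col_mx[/stack_inj eq_u /stack_inj eq_y].
apply: eq_stack => k ltkL; rewrite add0n.
exact: (io_trajectory_output_unique hL0 hL htraj
          (freq_signal_io_trajectory freq_state freq_output _ _) eq_u eq_y).
Qed.
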